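(* For every $d\ge1$, $t>0$ and $\epsilon>0$, $r^*_{t,\epsilon,d}\ge r^*_{t,\epsilon,1}$.
   Context: Training points $y_k\boldsymbol e_1\in\mathbb R^d$, $k\in[n]$, $y_k=2(k-1)\Delta-D$, $\Delta=D/(n-1)$. $p_{\mathcal N}(x;\sigma)=(\sqrt{2\pi}\sigma)^{-1}e^{-x^2/(2\sigma^2)}$; $p^{(n,1)}_t(x)=\frac1n\sum_kp_{\mathcal N}(x-y_k;\sqrt t)$; $p^{(n,d)}_t(\boldsymbol x)=p^{(n,1)}_t(x_1)\prod_{i\ge2}p_{\mathcal N}(x_i;\sqrt t)$; $L^{(n,d)}_t[\boldsymbol f]=t\,\mathbb E_{p^{(n,d)}_t}\|\boldsymbol f-\nabla\log p^{(n,d)}_t\|^2$ for measurable $\boldsymbol f:\mathbb R^d\to\mathbb R^d$. Admissible $\boldsymbol f$: every line restriction $h_{\boldsymbol w,\boldsymbol b}(x)=\boldsymbol f(\boldsymbol wx+\boldsymbol b)$ ($\boldsymbol w\in\mathbb S^{d-1}$, $\boldsymbol b\in\mathbb R^d$) is continuous and twice differentiable outside a finite set $N_{\boldsymbol w,\boldsymbol b}$; $R^{(d)}[\boldsymbol f]=\sup_{\boldsymbol w,\boldsymbol b}\sup\{\sum_i\|h'_{\boldsymbol w,\boldsymbol b}(x_{i+1})-h'_{\boldsymbol w,\boldsymbol b}(x_i)\|:x_1<\dots<x_m\in\mathbb R\setminus N_{\boldsymbol w,\boldsymbol b}\}$. $r^*_{t,\epsilon,d}=\inf\{R^{(d)}[\boldsymbol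 f]:\boldsymbol f\text{ admissible},\ L^{(n,d)}_t[\boldsymbol f]<\epsilon\}$. *)

From HB Require Import structures.
From mathcomp Require Import all_boot all_order all_algebra.
From mathcomp Require Import all_classical all_reals all_analysis.
Set Implicit Arguments. Unset Strict Implicit. Unset Printing Implicit Defensive.
Import Order.TTheory GRing.Theory Num.Theory.
Import numFieldNormedType.Exports.
Local Open Scope classical_set_scope.
Local Open Scope ring_scope.

Section Defs.
Variable R : realType.

Definition enorm (d : nat) (v : 'rV[R]_d) : R := Num.sqrt (\sum_(i < d) (v 0 i) ^+ 2).

Definition pN (x sigma : R) : R :=
  (Num.sqrt (2 * pi) * sigma)^-1 * expR (- (x ^+ 2) / (2 * sigma ^+ 2)).

(* training points y_k = 2(k-1)Delta - D, k = 1..n ; here k : 'I_n is 0-based *)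
Definition ypt (n : nat) (D : R) (k : nat) : R :=
  2 * k%:R * (D / (n.-1)%:R) - D.

Definition p1 (n : nat) (D t x : R) : R :=
  (n%:R)^-1 * \sum_(k < n) pN (x - ypt n D k) (Num.sqrt t).

Definition pnd (n : nat) (D t : R) (d : nat) (x : 'rV[R]_d) : R :=
  \prod_(i < d) (if (i == 0 :> nat) then p1 n D t (x 0 i) else pN (x 0 i) (Num.sqrt t)).

Definition grad_log_p (n : nat) (D t : R) (d : nat) (x : 'rV[R]_d) : 'rV[R]_d :=
  \row_(i < d) derive (fun z : 'rV[R]_d => ln (pnd n D t z)) x (delta_mx 0 i).

Fixpoint iint (k : nat) (G : (nat -> R) -> \bar R) : \bar R :=
  match k with
  | 0 => G (fun _ => 0)
  | k'.+1 => (\int[@lebesgue_measure R]_x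
                 iint k' (fun g => G (fun j => if j == k' then x else g j)))%E
  end.

(* integral over R^d w.r.t. Lebesgue measure (as an iterated integral) *)
Definition int_Rd (d : nat) (F : 'rV[R]_d -> \bar R) : \bar R :=
  iint d (fun g => F (\row_(i < d) g (i : nat))).

Definition borel_meas (d : nat) (f : 'rV[R]_d -> 'rV[R]_d) : Prop :=
  forall U : set 'rV[R]_d, open U -> <<s open >> (f @^-1` U).

Definition Lloss (n : nat) (D t : R) (d : nat) (f : 'rV[R]_d -> 'rV[R]_d) : \bar R :=
  (t%:E * int_Rd (fun x => (pnd n D t x * (enorm (f x - grad_log_p n D t x)) ^+ 2)%:E))%E.

Definition hline (d : nat) (f : 'rV[R]_d -> 'rV[R]_d) (w b : 'rV[R]_d) : R -> 'rV[R]_d :=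
  fun x => f (x *: w + b).

Definition twice_diff (d : nat) (h : R -> 'rV[R]_d) (x : R) : Prop :=
  (\forall y \near x, derivable h y 1) /\ derivable (derive1 h) x 1.

Definition admissible (d : nat) (f : 'rV[R]_d -> 'rV[R]_d) : Prop :=
  forall w b : 'rV[R]_d, enorm w = 1 ->
    continuous (hline f w b) /\
    finite_set [set x | ~ twice_diff (hline f w b) x].

Definition var_deriv (d : nat) (h : R -> 'rV[R]_d) : \bar R :=
  ereal_sup [set (\sum_(i < (size s).-1)
                    enorm (derive1 h (nth 0 s i.+1) - derive1 h (nth 0 s i)))%:E
            | s in [set s : seq R | sorted <%R s /\ (forall x, x \in s -> twice_diff h x)]].

Definition Rreg (d : nat) (f : 'rV[R]_d -> 'rV[R]_d) : \bar R :=
  ereal_sup [set var_deriv (hline f wb.1 wb.2)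
            | wb in [set wb : 'rV[R]_d * 'rV[R]_d | enorm wb.1 = 1]].

Definition rstar (n : nat) (D t eps : R) (d : nat) : \bar R :=
  ereal_inf [set Rreg f | f in [set f : 'rV[R]_d -> 'rV[R]_d |
       admissible f /\ borel_meas f /\ (Lloss n D t f < eps%:E)%E]].

End Defs.

From HB Require Import structures.
From mathcomp Require Import all_boot all_order all_algebra.
From mathcomp Require Import all_classical all_reals all_analysis.
From mathcomp Require Import ring lra zify measurable_realfun.
Import Order.TTheory GRing.Theory Num.Theory.
Import numFieldNormedType.Exports.
Local Open Scope classical_set_scope.
Local Open Scope ring_scope.
Set Implicit Arguments. Unset Strict Implicit. Unset Printing Implicit Defensive.

(* Let f have loss below eps in dimension d.  Since p_t factorises as
   p1(x_1) times a Gaussian weight W(z) in the remaining coordinates z, the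
   first coordinate of the score depends on x_1 only, and the loss of f is at
   least the W-average over z of the one-dimensional loss of the slice
   y |-> f(y, z)_1.  As W is a probability density, some slice has
   one-dimensional loss below eps.  The slice is admissible and Borel, and its
   regularity is at most R(f): its line restrictions are first coordinates of
   line restrictions of f, and projecting does not increase the variation of
   the derivative (after moving the partition off the finitely many points
   where f is not twice differentiable). *)

(* No measurability is required: the integral of a nonnegative function is the
   supremum of the integrals of its simple minorants. *)
Section nonneg_integral.
Context d (T : measurableType d) (R : realType) (mu : {measure set T -> \bar R}).
Local Open Scope ereal_scope.

Lemma nonneg_le_integral (f g : T -> \bar R) :
  (forall x, 0 <= f x) -> (forall x, f x <= g x) ->
  \int[mu]_x f x <= \int[mu]_x g x.
Proof.
move=> f0 fg; have g0 x : 0 <= g x by exact: le_trans (f0 x) (fg x).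
rewrite !ge0_integralTE //; apply: ereal_sup_le => _ [h hf <-]; exists h => //.
by move=> x; exact: le_trans (hf x) (fg x).
Qed.

Lemma nonneg_integralZl_le (c : R) (f : T -> \bar R) :
  (0 < c)%R -> (forall x, 0 <= f x) ->
  c%:E * \int[mu]_x f x <= \int[mu]_x (c%:E * f x).
Proof.
move=> c0 f0; have cf0 x : 0 <= c%:E * f x by rewrite mule_ge0 // lee_fin ltW.
rewrite !ge0_integralTE // -ereal_sup_pZl //.
apply: ereal_sup_le => _ [_ [h hf <-] <-]; exists (scale_nnsfun h (ltW c0)).
  by move=> x /=; rewrite EFinM lee_pmul2l ?lte_fin.
by rewrite -sintegralrM.
Qed.

End nonneg_integral.

Section gaussian.
Context {R : realType}.
Local Notation mu := (@lebesgue_measure R).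

Lemma pN_normal_pdf (x s : R) : 0 < s -> pN x s = normal_pdf 0 s x.
Proof.
move=> s0; rewrite /pN /normal_pdf gt_eqF // /normal_peak /normal_fun subr0.
congr (_ * expR _); last by congr (- _ / _); ring.
congr (_^-1).
have -> : s ^+ 2 * pi *+ 2 = s ^+ 2 * (2 * pi) by ring.
by rewrite [RHS]sqrtrM ?sqr_ge0 // sqrtr_sqr gtr0_norm // mulrC.
Qed.

Lemma pN_gt0 (x s : R) : 0 < s -> 0 < pN x s.
Proof.
move=> s0; rewrite /pN mulr_gt0 ?expR_gt0 // invr_gt0 mulr_gt0 // sqrtr_gt0.
by rewrite mulr_gt0 // pi_gt0.
Qed.

Lemma integral_scaled_pN (c s : R) : 0 <= c -> 0 < s ->
  (\int[mu]_y (c * pN y s)%:E = c%:E)%E.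
Proof.
move=> c0 s0; under eq_integral do rewrite EFinM pN_normal_pdf //.
rewrite ge0_integralZl_EFin //; last first.
- by apply/measurable_EFinP; exact: measurable_normal_pdf.
- by move=> x _; rewrite lee_fin normal_pdf_ge0.
by rewrite integral_normal_pdf mule1.
Qed.

End gaussian.

Section iterated_integral.
Context {R : realType}.
Local Notation mu := (@lebesgue_measure R).

Definition set_coord (k : nat) (x : R) (g : nat -> R) : nat -> R :=
  fun j => if j == k then x else g j.

Lemma set_coordC a b x y g : a != b ->
  set_coord a x (set_coord b y g) = set_coord b y (set_coord a x g).
Proof.
move=> ab; apply/funext => j; rewrite /set_coord.
by case: (eqVneq j a) => [->|//]; rewrite (negbTE ab).
Qed.

(* [iint_from k m G] integrates [G] over the coordinates [m, ..., m + k - 1],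
   the last one outermost, as [iint] does for [m = 0]. *)
Fixpoint iint_from (k m : nat) (G : (nat -> R) -> \bar R) : \bar R :=
  match k with
  | 0 => G (fun _ => 0)
  | k'.+1 => (\int[mu]_x iint_from k' m (fun g => G (set_coord (k' + m) x g)))%E
  end.

Lemma iint_from0 k G : iint k G = iint_from k 0 G.
Proof. by elim: k G => [//|k IH] G /=; apply: eq_integral => x _; rewrite IH addn0. Qed.

Lemma iint_fromS_innermost k m G :
  iint_from k.+1 m G = iint_from k m.+1 (fun z => \int[mu]_x G (set_coord m x z))%E.
Proof.
elim: k m G => [|k IH] m G; first by rewrite /= add0n.
transitivity
  (\int[mu]_y iint_from k.+1 m (fun g => G (set_coord (k.+1 + m) y g)))%E => //.
under eq_integral do rewrite IH.
apply: eq_integral => y _; congr iint_from; apply/funext => z.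
apply: eq_integral => x _; rewrite set_coordC ?addnS ?addSn //.
by rewrite -addnS gtn_eqF // ltn_addl.
Qed.

Lemma iint_from_ge0 k m G : (forall g, 0 <= G g)%E -> (0 <= iint_from k m G)%E.
Proof.
by elim: k m G => [|k IH] m G G0 //=; apply: integral_ge0 => x _; exact: IH.
Qed.

Lemma le_iint_from k m G H : (forall g, 0 <= G g)%E -> (forall g, G g <= H g)%E ->
  (iint_from k m G <= iint_from k m H)%E.
Proof.
elim: k m G H => [|k IH] m G H G0 GH //=.
by apply: nonneg_le_integral => x; [exact: iint_from_ge0|exact: IH].
Qed.

Lemma iint_from_gauss k m (c s : R) : 0 <= c -> 0 < s ->
  iint_from k m (fun z => (c * \prod_(i < k) pN (z (m + i)%N) s)%:E) = c%:E.
Proof.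
elim: k c => [|k IH] c c0 s0; first by rewrite /= big_ord0 mulr1.
rewrite /= -(integral_scaled_pN c0 s0); apply: eq_integral => y _.
have cp : 0 <= c * pN y s by rewrite mulr_ge0 // ltW // pN_gt0.
rewrite -(IH _ cp s0); congr iint_from; apply/funext => g; congr (_%:E).
rewrite big_ord_recr /= mulrA mulrAC; congr (_ * _ * _).
  by rewrite /set_coord addnC eqxx.
apply: eq_bigr => i _; rewrite /set_coord [(k + m)%N]addnC eqn_add2l.
by rewrite (ltn_eqF (ltn_ord i)).
Qed.

End iterated_integral.

Section euclidean_norm.
Context {R : realType}.

Lemma enorm_sqr d (v : 'rV[R]_d) : enorm v ^+ 2 = \sum_(i < d) (v 0 i) ^+ 2.
Proof. by rewrite /enorm sqr_sqrtr // sumr_ge0 // => i _; rewrite sqr_ge0. Qed.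

Lemma sqr_le_enorm d' (v : 'rV[R]_d'.+1) : (v 0 0) ^+ 2 <= enorm v ^+ 2.
Proof. by rewrite enorm_sqr big_ord_recl lerDl sumr_ge0 // => i _; exact: sqr_ge0. Qed.

Lemma norm_le_enorm d' (v : 'rV[R]_d'.+1) : `|v 0 0| <= enorm v.
Proof.
rewrite -sqrtr_sqr /enorm ler_sqrt ?sumr_ge0 // => [|i _]; last exact: sqr_ge0.
by rewrite big_ord_recl lerDl sumr_ge0 // => i _; exact: sqr_ge0.
Qed.

Lemma enorm_row1 (v : 'rV[R]_1) : enorm v = `|v 0 0|.
Proof. by rewrite /enorm big_ord1 sqrtr_sqr. Qed.

Lemma enorm_scale_delta0 d' (c : R) : enorm (c *: delta_mx 0 0 : 'rV[R]_d'.+1) = `|c|.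
Proof.
rewrite /enorm big_ord_recl big1 ?addr0 => [|i _]; last by rewrite !mxE mulr0 expr0n.
by rewrite !mxE mulr1 sqrtr_sqr.
Qed.

End euclidean_norm.

Section rows.
Context {R : realType}.

(* The point (x, z 1, ..., z d'); the value [z 0] is ignored. *)
Definition slice_point {d'} (z : nat -> R) (x : R) : 'rV[R]_d'.+1 :=
  \row_(i < d'.+1) set_coord 0 x z i.

Definition head_row {d'} (v : 'rV[R]_d'.+1) : 'rV[R]_1 := (v 0 0) *: const_mx 1.

Definition slice {d'} (f : 'rV[R]_d'.+1 -> 'rV[R]_d'.+1) (z : nat -> R)
  (y : 'rV[R]_1) : 'rV[R]_1 := head_row (f (slice_point z (y 0 0))).

Lemma head_row00 d' (v : 'rV[R]_d'.+1) : head_row v 0 0 = v 0 0.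
Proof. by rewrite /head_row !mxE mulr1. Qed.

Lemma slice_point_shift d' z (x h : R) :
  h *: delta_mx 0 0 + @slice_point d' z x = slice_point z (h + x).
Proof.
apply/matrixP => i j; rewrite !mxE /set_coord (ord1 i) /=.
by case: j => [[|j'] hj] /=; [rewrite mulr1|rewrite mulr0 add0r].
Qed.

End rows.

Section slices.
Context {R : realType} (n : nat) (D t : R).
Hypotheses (n_gt0 : (0 < n)%N) (t_gt0 : 0 < t).
Local Notation mu := (@lebesgue_measure R).

Definition gauss_weight d' (z : nat -> R) : R :=
  \prod_(i < d') pN (z (1 + i)%N) (Num.sqrt t).

Definition score1 (x : R) : R := 'D_1 (fun y => ln (p1 n D t y)) x.

Definition slice_risk {d'} (f : 'rV[R]_d'.+1 -> 'rV[R]_d'.+1) (z : nat -> R) :=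
  (\int[mu]_x (p1 n D t x * (f (slice_point z x) 0 0 - score1 x) ^+ 2)%:E)%E.

Lemma gauss_weight_gt0 d' z : 0 < gauss_weight d' z.
Proof.
rewrite /gauss_weight; elim/big_ind: _ => //; first exact: mulr_gt0.
by move=> i _; apply: pN_gt0; rewrite sqrtr_gt0.
Qed.

Lemma p1_gt0 x : 0 < p1 n D t x.
Proof.
move: n_gt0; case: n => // n' _; rewrite /p1 mulr_gt0 // ?invr_gt0 ?ltr0n //.
have st : 0 < Num.sqrt t by rewrite sqrtr_gt0.
rewrite big_ord_recl ltr_wpDr ?pN_gt0 ?sumr_ge0 // => i _.
by rewrite ltW // pN_gt0.
Qed.

Lemma pnd_slice_point d' z x :
  pnd n D t (@slice_point _ d' z x) = p1 n D t x * gauss_weight d' z.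
Proof.
rewrite /pnd big_ord_recl /= !mxE /set_coord eqxx; congr (_ * _).
by apply: eq_bigr => i _; rewrite !mxE /= /set_coord /= add1n.
Qed.

(* The density factorises along the slice, so the Gaussian weight cancels
   in the difference quotient of [ln (pnd _)]. *)
Lemma grad_log_p_slice_point d' z x :
  grad_log_p n D t (@slice_point _ d' z x) 0 0 = score1 x.
Proof.
rewrite /grad_log_p mxE /score1 /derive; congr (lim _); f_equal.
apply/funext => h /=; rewrite -[h%:A]/(h * 1) mulr1 slice_point_shift.
rewrite !pnd_slice_point.
have p1_pos y : p1 n D t y \is Num.pos by rewrite posrE p1_gt0.
have w_pos : gauss_weight d' z \is Num.pos by rewrite posrE gauss_weight_gt0.
by rewrite !(lnM (p1_pos _) w_pos); congr (_ *: _); ring.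
Qed.

Lemma Lloss_slice d' (f : 'rV[R]_d'.+1 -> 'rV[R]_d'.+1) z :
  Lloss n D t (slice f z) = (t%:E * slice_risk f z)%E.
Proof.
rewrite /Lloss /int_Rd /slice_risk /=; congr (_ * _)%E.
apply: eq_integral => x _; congr (_%:E).
rewrite -[\row__ _]/(@slice_point _ 0 (fun _ => 0) x) pnd_slice_point.
rewrite /gauss_weight big_ord0 mulr1 enorm_row1 [X in `|X|]mxE [X in `|_ + X|]mxE.
rewrite grad_log_p_slice_point /slice head_row00 mxE /set_coord eqxx.
by rewrite real_normK // num_real.
Qed.

Lemma Lloss_ge_weighted_slice_risk d' (f : 'rV[R]_d'.+1 -> 'rV[R]_d'.+1) :
  (t%:E * iint_from d' 1 (fun z => (gauss_weight d' z)%:E * slice_risk f z)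
   <= Lloss n D t f)%E.
Proof.
rewrite /Lloss /int_Rd iint_from0 iint_fromS_innermost lee_pmul2l ?lte_fin //.
apply: le_iint_from => z.
  apply: mule_ge0; first by rewrite lee_fin ltW ?gauss_weight_gt0.
  by apply: integral_ge0 => x _; rewrite lee_fin mulr_ge0 ?sqr_ge0 // ltW // p1_gt0.
apply: le_trans (nonneg_integralZl_le _ (gauss_weight_gt0 d' z) _) _.
  by move=> x; rewrite lee_fin mulr_ge0 ?sqr_ge0 // ltW // p1_gt0.
apply: nonneg_le_integral => x.
  by rewrite -EFinM lee_fin (mulr_ge0 (ltW (gauss_weight_gt0 _ _))) // mulr_ge0 ?sqr_ge0 // ltW // p1_gt0.
rewrite -EFinM lee_fin -[\row__ _]/(slice_point z x) pnd_slice_point.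
have := sqr_le_enorm (f (slice_point z x) - grad_log_p n D t (slice_point z x)).
rewrite mxE [X in _ + X]mxE grad_log_p_slice_point.
have := mulr_gt0 (p1_gt0 x) (gauss_weight_gt0 d' z).
nra.
Qed.

Lemma exists_slice_Lloss_lt d' (f : 'rV[R]_d'.+1 -> 'rV[R]_d'.+1) (eps : R) :
  0 < eps -> (Lloss n D t f < eps%:E)%E ->
  exists z, (Lloss n D t (slice f z) < eps%:E)%E.
Proof.
move=> eps_gt0 lt_eps; apply: contrapT => no_slice.
have eps_t : eps = t * (eps / t) by rewrite mulrC divfK ?gt_eqF.
have ge_risk z : ((eps / t)%:E <= slice_risk f z)%E.
  rewrite leNgt; apply/negP => lt_risk; apply: no_slice; exists z.
  by rewrite Lloss_slice eps_t EFinM lte_pmul2l ?lte_fin.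
suff : (eps%:E <= Lloss n D t f)%E by rewrite leNgt lt_eps.
apply: le_trans (Lloss_ge_weighted_slice_risk f).
have eps_t_ge0 : 0 <= eps / t by rewrite divr_ge0 ?ltW.
rewrite {1}eps_t EFinM lee_pmul2l ?lte_fin //.
have sqrt_t_gt0 : 0 < Num.sqrt t by rewrite sqrtr_gt0.
rewrite -(iint_from_gauss d' 1 eps_t_ge0 sqrt_t_gt0).
apply: le_iint_from => z.
  by rewrite lee_fin mulr_ge0 // prodr_ge0 // => i _; rewrite ltW // pN_gt0.
rewrite -/(gauss_weight d' z) EFinM [X in (_ <= X)%E]muleC.
by rewrite lee_pmul2r ?lte_fin ?gauss_weight_gt0.
Qed.

End slices.

Lemma open_sigma_preimage_continuous (X Y : topologicalType) (phi : X -> Y) :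
  continuous phi -> forall A, <<s open >> A -> <<s open >> (phi @^-1` A).
Proof.
move=> cphi; suff sub : <<s open >> `<=` [set A | <<s open >> (phi @^-1` A)].
  by move=> A /sub.
have [sig0 sigC sigU] := @smallest_sigma_algebra X setT open.
apply: smallest_sub; first split => /=.
- by rewrite preimage_set0.
- move=> A sA; rewrite (_ : _ @^-1` _ = setT `\` phi @^-1` A); first exact: sigC.
  by apply/seteqP; split => x /=.
- by move=> F sF; rewrite preimage_bigcup; exact: sigU.
move=> U oU; apply: sub_sigma_algebra; apply: open_comp oU => x _; exact: cphi.
Qed.

Section slice_regularity.
Context {R : realType} (d' : nat).
Implicit Types (f : 'rV[R]_d'.+1 -> 'rV[R]_d'.+1) (h : R -> 'rV[R]_d'.+1).

Lemma head_row_continuous : continuous (@head_row R d').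
Proof.
move=> v; apply: (@continuous_comp _ _ _ (fun M : 'rV[R]_d'.+1 => M 0 0)
  (fun c : R => c *: (const_mx 1 : 'rV[R]_1))).
  exact: coord_continuous.
exact: scalel_continuous.
Qed.

Lemma head_rowZB (k : R) (u v : 'rV[R]_d'.+1) :
  head_row (k *: (u - v)) = k *: (head_row u - head_row v).
Proof. by rewrite /head_row !mxE -scalerA scalerBl. Qed.

Lemma cvg_head_row_derive h x : derivable h x 1 ->
  (fun s : R => s^-1 *: (((head_row \o h) \o shift x) (s *: 1) - head_row (h x)))
    @ 0^' --> head_row (derive h x 1).
Proof.
move=> dh; have -> : (fun s : R => s^-1 *: (((head_row \o h) \o shift x) (s *: 1)
                        - head_row (h x))) =
    head_row \o (fun s : R => s^-1 *: ((h \o shift x) (s *: 1) - h x)).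
  by apply/funext => s /=; rewrite head_rowZB.
exact: continuous_cvg _ (@head_row_continuous _) dh.
Qed.

Lemma derivable_head_row h x : derivable h x 1 -> derivable (head_row \o h) x 1.
Proof. by move=> /cvg_head_row_derive cvg_h; apply/cvg_ex; eexists; exact: cvg_h. Qed.

Lemma derive_head_row h x : derivable h x 1 ->
  derive (head_row \o h) x 1 = head_row (derive h x 1).
Proof. by move=> /cvg_head_row_derive cvg_h; exact: cvg_lim cvg_h. Qed.

Lemma twice_diff_head_row h x : twice_diff h x -> twice_diff (head_row \o h) x.
Proof.
move=> [near_dh dh']; split; first by apply: filterS near_dh => y /derivable_head_row.
have eq_d : {near x, head_row \o derive1 h =1 derive1 (head_row \o h)}.
  by apply: filterS near_dh => y dhy; rewrite /= !derive1E derive_head_row.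
by apply: near_eq_derivable eq_d _; exact: derivable_head_row.
Qed.

Lemma hline_slice f z (w b : 'rV[R]_1) :
  hline (slice f z) w b =
  head_row \o hline f (w 0 0 *: delta_mx 0 0) (slice_point z (b 0 0)).
Proof.
apply/funext => x; rewrite /hline /slice /= scalerA slice_point_shift.
by rewrite [(x *: w + b) 0 0]mxE [(x *: w) 0 0]mxE.
Qed.

Lemma admissible_slice f z : admissible f -> admissible (slice f z).
Proof.
move=> adm_f w b w1; rewrite hline_slice.
have [|cont_f fin_f] := adm_f (w 0 0 *: delta_mx 0 0) (slice_point z (b 0 0)).
  by rewrite enorm_scale_delta0 -enorm_row1.
split; first by move=> x; apply: continuous_comp; [exact: cont_f|exact: head_row_continuous].
by apply: sub_finite_set fin_f => x /= ntd td; apply: ntd; exact: twice_diff_head_row.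
Qed.

Lemma borel_meas_slice f z : borel_meas f -> borel_meas (slice f z).
Proof.
move=> bf U oU.
rewrite (_ : slice f z @^-1` U = (fun y : 'rV[R]_1 => slice_point z (y 0 0)) @^-1`
                                  (f @^-1` (head_row @^-1` U))) //.
apply: open_sigma_preimage_continuous; last first.
  by apply: bf; apply: open_comp oU => x _; exact: head_row_continuous.
have -> : (fun y : 'rV[R]_1 => @slice_point R d' z (y 0 0)) =
          (fun y => y 0 0 *: delta_mx 0 0 + slice_point z 0).
  by apply/funext => y; rewrite slice_point_shift addr0.
move=> y; apply: (@continuous_comp _ _ _ (fun M : 'rV[R]_1 => M 0 0)
  (fun c : R => c *: (delta_mx 0 0 : 'rV[R]_d'.+1) + slice_point z 0)).
  exact: coord_continuous.
by apply: cvgD; [exact: scalel_continuous|exact: cvg_cst].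
Qed.

End slice_regularity.

Section shifting_points.
Context {R : realType}.

Lemma finite_set_avoid (B : set R) (a b : R) : finite_set B -> a < b ->
  exists y, [/\ a < y, y < b & ~ B y].
Proof.
move=> fin_B ab; apply: contrapT => all_in_B.
have ba : 0 < b - a by rewrite subr_gt0.
pose y k := a + (b - a) / k.+2%:R.
have B_y k : B (y k).
  apply: contrapT => nB; apply: all_in_B; exists (y k); split => //.
    by rewrite /y ltrDl divr_gt0.
  by rewrite /y -ltrBrDl ltr_pdivrMr // ltr_pMr // ltr1n.
have inj_y : {in y @^-1` B &, injective y}.
  move=> j k _ _ /addrI /(mulfI (lt0r_neq0 ba)) /invr_inj /eqP.
  by rewrite eqr_nat => /eqP [].
have := finite_preimage inj_y fin_B.
rewrite (_ : y @^-1` B = setT); first exact: infinite_nat.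
by apply/seteqP; split => // k _; exact: B_y.
Qed.

Lemma sorted_shift_avoid (phi : R -> R) (B : set R) (e : R) (s : seq R) :
  finite_set B -> 0 < e -> sorted <%R s ->
  (forall x, x \in s -> {for x, continuous phi}) ->
  exists s' : seq R, [/\ size s' = size s, sorted <%R s',
    (forall y, y \in s' -> ~ B y),
    (forall i, (i < size s)%N -> `|phi (nth 0 s' i) - phi (nth 0 s i)| < e) &
    (forall i, (i < size s)%N -> nth 0 s i < nth 0 s' i)].
Proof.
move=> fin_B e_gt0; elim: s => [|x s IH] sorted_xs cont_xs; first by exists [::].
have [s' [size_s' sorted_s' avoid_s' close_s' right_s']] := IH (path_sorted sorted_xs)
  (fun y ys => cont_xs y (mem_behead (s := x :: s) ys)).
have x_lt_u : x < head (x + 1) s.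
  by case: s sorted_xs {IH size_s' right_s' close_s' cont_xs} => [|? ?] /=;
    [rewrite ltrDl|case/andP].
have [r r_gt0 near_x] : exists2 r, 0 < r &
    forall y, `|x - y| < r -> `|phi x - phi y| < e.
  move: (cont_xs x (mem_head x s)) => /cvgrPdist_lt /(_ e e_gt0).
  by move/nbhs_normP => [r r0 Hr]; exists r => // y hy; exact: Hr.
have [|y [xy y_lt y_nB]] := @finite_set_avoid B x (Num.min (head (x + 1) s) (x + r)) fin_B.
  by rewrite lt_min x_lt_u ltrDl.
move: y_lt; rewrite lt_min => /andP [y_lt_u y_lt_xr].
exists (y :: s'); split => //=.
- by rewrite size_s'.
- case: s' size_s' sorted_s' right_s' {avoid_s' close_s'} => [//|y' s'] /= size_s' -> right_s'.
  case: s size_s' right_s' y_lt_u {IH sorted_xs cont_xs x_lt_u} => [//|x' s] _ right_s' y_lt_u.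
  by rewrite andbT; apply: lt_trans y_lt_u (right_s' 0%N _).
- by move=> z; rewrite inE => /orP [/eqP ->|/avoid_s'].
- case=> [_|i]; last exact: close_s'.
  by rewrite distrC; apply: near_x; rewrite distrC gtr0_norm ?subr_gt0 // ltrBlDl.
- by case=> [_ //|i]; exact: right_s'.
Qed.

Lemma sum_dist_le_shift (a b : nat -> R) (m : nat) (ep : R) :
  (forall i, (i < m)%N -> `|b i - a i| < ep) ->
  \sum_(i < m.-1) `|a i.+1 - a i| <= \sum_(i < m.-1) `|b i.+1 - b i| + (2 * ep) *+ m.-1.
Proof.
move=> close; have -> : (2 * ep) *+ m.-1 = \sum_(i < m.-1) 2 * ep.
  by rewrite sumr_const card_ord.
rewrite -big_split /=.
apply: ler_sum => i _.
have i_lt : (i.+1 < m)%N by have := ltn_ord i; lia.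
have := close _ i_lt; have := close i (ltnW i_lt).
have := ler_distD (b i.+1) (a i.+1) (a i); have := ler_distD (b i) (b i.+1) (a i).
rewrite [`|a i.+1 - b i.+1|]distrC [`|b i.+1 - b i|]distrC; lra.
Qed.

End shifting_points.

Section variation.
Context {R : realType} (d' : nat).

(* A point of the partition may be a twice-differentiability point of
   [head_row \o h] but not of [h]; the partition is first shifted off those. *)
Lemma var_deriv_head_row (h : R -> 'rV[R]_d'.+1) :
  finite_set [set x | ~ twice_diff h x] ->
  (var_deriv (head_row \o h) <= var_deriv h)%E.
Proof.
move=> fin_bad; apply: ge_ereal_sup => _ [s [sorted_s td_s] <-].
set phi := fun y => derive1 (head_row \o h) y 0 0.
have cont_phi x : x \in s -> {for x, continuous phi}.
  move=> /td_s [_ dx].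
  apply: (@continuous_comp _ _ _ (derive1 (head_row \o h)) (fun M : 'rV[R]_1 => M 0 0)).
    by apply: differentiable_continuous; exact/derivable1_diffP.
  exact: coord_continuous.
under eq_bigr do rewrite enorm_row1 [X in `|X|]mxE [X in `|_ + X|]mxE -!/(phi _).
apply/lee_addgt0Pr => e e_gt0; set m := size s.
set ep := e / (2 * m%:R + 1).
have ep_gt0 : 0 < ep by rewrite divr_gt0 // ltr_wpDl // mulr_ge0.
have ep_e : ep * (2 * m%:R + 1) = e by rewrite divfK // gt_eqF // ltr_wpDl // mulr_ge0.
have [s' [size_s' sorted_s' avoid_s' close_s' _]] :=
  sorted_shift_avoid fin_bad ep_gt0 sorted_s cont_phi.
have td_s' y : y \in s' -> twice_diff h y.
  by move=> /avoid_s' nB; apply: contrapT.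
have phi_s' y : y \in s' -> phi y = derive1 h y 0 0.
  by move=> /td_s' [/nbhs_singleton dh _]; rewrite /phi !derive1E derive_head_row // head_row00.
set S' := \sum_(i < (size s').-1)
  enorm (derive1 h (nth 0 s' i.+1) - derive1 h (nth 0 s' i)).
have S'_le : (S'%:E <= var_deriv h)%E by apply: ereal_sup_ubound; exists s'.
apply: le_trans (leeD2r _ S'_le); rewrite -EFinD lee_fin.
apply: le_trans (sum_dist_le_shift close_s') _; rewrite /S' size_s' lerD //.
  apply: ler_sum => i _; have i_lt : (i.+1 < m)%N by have := ltn_ord i; lia.
  rewrite !phi_s' ?mem_nth ?size_s' ?(ltnW i_lt) //.
  have := norm_le_enorm (derive1 h (nth 0 s' i.+1) - derive1 h (nth 0 s' i)).
  by rewrite mxE [X in _ + X]mxE.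
have : (m.-1)%:R <= m%:R :> R by rewrite ler_nat leq_pred.
rewrite -mulr_natr; nra.
Qed.

Lemma Rreg_slice (f : 'rV[R]_d'.+1 -> 'rV[R]_d'.+1) z : admissible f ->
  (Rreg (slice f z) <= Rreg f)%E.
Proof.
move=> adm_f; apply: ge_ereal_sup => _ [[w b] /= w1 <-]; rewrite hline_slice.
have unit_w : enorm (w 0 0 *: delta_mx 0 0 : 'rV[R]_d'.+1) = 1.
  by rewrite enorm_scale_delta0 -enorm_row1.
apply: le_trans (var_deriv_head_row (adm_f _ _ unit_w).2) _.
by apply: ereal_sup_ubound; exists (w 0 0 *: delta_mx 0 0, slice_point z (b 0 0)).
Qed.

End variation.

Theorem mainTheorem10 (R : realType) (n : nat) (D : R) :
  (2 <= n)%N -> 0 < D ->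
  forall (d : nat) (t eps : R), (1 <= d)%N -> 0 < t -> 0 < eps ->
    (rstar n D t eps 1 <= rstar n D t eps d)%E.
Proof.
move=> n_ge2 _ [//|d'] t eps _ t_gt0 eps_gt0.
have n_gt0 : (0 < n)%N by apply: leq_trans n_ge2.
apply: le_ereal_inf_tmp => _ [f [adm_f [borel_f loss_f]] <-].
have [z loss_z] := exists_slice_Lloss_lt n_gt0 t_gt0 eps_gt0 loss_f.
apply: le_trans (Rreg_slice z adm_f); apply: ereal_inf_lbound.
by exists (slice f z) => //; split; [exact: admissible_slice|split; [exact: borel_meas_slice|]].
Qed.
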